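(* Let $S$ be a finite set of points in the plane and let $\mathcal D$ be a set of $k$ pairwise non-opposite directions such that $S$ is in $\mathcal D$-general position. If $T$ is a $\mathcal D$-monotone geometric spanning tree of $S$, then $T$ has at most $2k$ leaves.
   Context: A direction is a unit vector in $\mathbb{R}^2$; two directions $d,d'$ are opposite if $d'=-d$. A finite point set $S$ is in $d$-general position if no two points of $S$ lie on a common line orthogonal to $d$; $S$ is in $\mathcal D$-general position if it is in $d$-general position for every $d\in\mathcal D$. A geometric path $\langle p_1,\dots,p_r\rangle$ is $d$-monotone if its vertex set is in $d$-general position and $\langle p_1,d\rangle,\dots,\langle p_r,d\rangle$ is strictly increasing or strictly decreasing. A geometric spanning tree of $S$ is a tree with vertex set $S$ whose edges are straight segments; it is $\mathcal D$-monotone if for every pair of vertices $u,v$ there is $d\in\mathcal D$ such that the path of $T$ from $u$ to $v$ is $d$-monotone. *)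

From mathcomp Require Import all_boot all_order all_algebra.
Set Implicit Arguments. Unset Strict Implicit. Unset Printing Implicit Defensive.
Import Order.TTheory GRing.Theory Num.Theory.
Local Open Scope ring_scope.

Definition dot (R : realFieldType) (p q : R * R) : R := p.1 * q.1 + p.2 * q.2.

Definition is_direction (R : realFieldType) (d : R * R) : bool :=
  d.1 ^+ 2 + d.2 ^+ 2 == 1.

Definition opposite (R : realFieldType) (d d' : R * R) : bool :=
  d' == (- d.1, - d.2).

Definition dgen_pos (R : realFieldType) (d : R * R) (s : seq (R * R)) : Prop :=
  forall p q, p \in s -> q \in s -> p != q -> dot p d != dot q d.

Definition dmonotone (R : realFieldType) (d : R * R) (s : seq (R * R)) : Prop :=
  dgen_pos d s /\
  (sorted (fun x y => x < y) [seq dot p d | p <- s] \/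
   sorted (fun x y => x > y) [seq dot p d | p <- s]).

Definition simple_graph (V : finType) (e : rel V) : Prop :=
  symmetric e /\ irreflexive e.

Definition simple_path (V : finType) (e : rel V) (u v : V) (p : seq V) : Prop :=
  [/\ path e u p, uniq (u :: p) & last u p = v].

Definition acyclic (V : finType) (e : rel V) : Prop :=
  forall c : seq V, uniq c -> (3 <= size c)%N -> ~~ cycle e c.

Definition is_tree (V : finType) (e : rel V) : Prop :=
  [/\ simple_graph e, (forall u v, connect e u v) & acyclic e].

Definition degree (V : finType) (e : rel V) (v : V) : nat := #|[set w | e v w]|.

Definition leaves (V : finType) (e : rel V) : {set V} := [set v | degree e v == 1%N].

(* A geometric spanning tree of S: vertices V embedded injectively by pos
   (S = image of pos), edges e forming a tree (drawn as straight segments).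
   It is D-monotone if for every pair u,v of vertices, some d in D makes the
   tree path from u to v d-monotone (the tree path being the unique simple path). *)
Definition D_monotone_tree (R : realFieldType) (V : finType) (pos : V -> R * R)
  (e : rel V) (D : seq (R * R)) : Prop :=
  forall u v : V, exists2 d, d \in D &
    forall p : seq V, simple_path e u v p -> dmonotone d [seq pos x | x <- u :: p].

From mathcomp Require Import all_boot all_order all_algebra.
From mathcomp Require Import ring lra.
Set Implicit Arguments. Unset Strict Implicit. Unset Printing Implicit Defensive.
Import Order.TTheory GRing.Theory Num.Theory.
Local Open Scope ring_scope.

(** Give each leaf [v], with unique neighbour [w], the sign pattern of the
    edge vector [pos w - pos v] against the directions of [D].  If two leaves
    had the same pattern, the d-monotone tree path joining them would leave
    the first leaf along [d] and enter the second one against [d], so at [d]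
    their patterns differ.  The sign patterns of vectors lying on none of the
    [k] lines orthogonal to [D] are the cells of a central arrangement of [k]
    lines, and there are at most [2k] of them: a new line through the origin
    splits at most the two cells it crosses. *)

(* The default [~~ b] of [head] keeps the empty pattern out of [tails_at b P]. *)
Definition tails_at (b : bool) (P : seq (seq bool)) : seq (seq bool) :=
  [seq behead p | p <- P & head (~~ b) p == b].

Lemma mem_tails_at b P q : (q \in tails_at b P) = (b :: q \in P).
Proof.
apply/mapP/idP => [[p] | bqP]; last by exists (b :: q); rewrite // mem_filter /= eqxx.
rewrite mem_filter; case: p => [|c p] /=; first by case: b.
by case/andP => /eqP -> pP ->.
Qed.

Lemma tails_at_uniq b P : uniq P -> uniq (tails_at b P).
Proof.
move=> uP; rewrite map_inj_in_uniq ?filter_uniq // => p p'; rewrite !mem_filter.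
case: p p' => [|c p] [|c' p'] /=; try by case: b.
by case/andP => /eqP -> _ /andP [/eqP -> _] ->.
Qed.

Lemma size_tails_at P : [::] \notin P ->
  size P = (size (tails_at true P) + size (tails_at false P))%N.
Proof.
move=> nilP; rewrite !size_map !size_filter -(count_predC (fun p => head false p == true)).
congr (_ + _)%N; apply: eq_in_count => -[|c p] /=; first by rewrite (negbTE nilP).
by case: c.
Qed.

Lemma size_union_inter (T : eqType) (s t : seq T) :
  (size s + size t = size (s ++ [seq x <- t | x \notin s]) + size [seq x <- t | x \in s])%N.
Proof.
rewrite size_cat !size_filter -addnA; congr (_ + _)%N.
by rewrite addnC -(count_predC (mem s)).
Qed.

Section SignPatterns.

Variable R : realFieldType.
Implicit Types (x y z d : R * R) (D : seq (R * R)).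

Definition sign_pattern D x : seq bool := [seq 0 < dot x d | d <- D].

Definition generic D x : bool := all (fun d => dot x d != 0) D.

Definition realized D (p : seq bool) : Prop :=
  exists2 x, generic D x & sign_pattern D x = p.

Definition perp d : R * R := (- d.2, d.1).

Lemma size_sign_pattern D x : size (sign_pattern D x) = size D.
Proof. exact: size_map. Qed.

Lemma realized_behead d D b q : realized (d :: D) (b :: q) -> realized D q.
Proof. by case=> x /andP [_ gx] [_ <-]; exists x. Qed.

Lemma dot_perp_decomposition z d d' :
  dot d d * dot z d' = dot z (perp d) * dot (perp d) d' + dot z d * dot d d'.
Proof. by rewrite /dot /=; ring. Qed.

Lemma dot_self_gt0 x d : dot x d != 0 -> 0 < dot d d.
Proof.
move=> xd; rewrite lt_def {2}/dot -!expr2 addr_ge0 ?sqr_ge0 // andbT.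
apply: contraNneq xd => /eqP; rewrite /dot -!expr2 paddr_eq0 ?sqr_ge0 //.
by rewrite !sqrf_eq0 => /andP [/eqP -> /eqP ->]; rewrite !mulr0 addr0.
Qed.

Lemma same_sign_patternP D x y : generic D x -> generic D y ->
  sign_pattern D x = sign_pattern D y <-> {in D, forall d, 0 < dot x d * dot y d}.
Proof.
move=> /allP gx /allP gy; split.
  move/eq_in_map => same d dD; move: (same d dD).
  move: (gx d dD) (gy d dD); rewrite !neq_lt => /orP [] hx /orP [] hy;
    rewrite ?(lt_gtF hx) ?(lt_gtF hy) ?hx ?hy // => _; nra.
move=> pos; apply/eq_in_map => d /pos xy.
by apply/idP/idP => ?; nra.
Qed.

(* [z] is the point where the segment from [y] to [x] meets the line [dot _ d = 0]. *)
Lemma sign_pattern_crossing D d x y :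
  generic D x -> generic D y -> sign_pattern D x = sign_pattern D y ->
  0 < dot x d -> dot y d < 0 ->
  exists z, [/\ generic D z, sign_pattern D z = sign_pattern D x & dot z d = 0].
Proof.
move=> gx gy /(same_sign_patternP gx gy) xy xd yd.
pose z := (dot x d * y.1 - dot y d * x.1, dot x d * y.2 - dot y d * x.2).
have dot_z d' : dot z d' = dot x d * dot y d' - dot y d * dot x d'.
  by rewrite /z /dot /=; ring.
have zx : {in D, forall d', 0 < dot z d' * dot x d'}.
  move=> d' /xy xyd'; rewrite dot_z.
  have yd' : 0 <= - dot y d by rewrite oppr_ge0 ltW.
  have := mulr_gt0 xd xyd'; have := mulr_ge0 yd' (sqr_ge0 (dot x d')).
  by lra.
have gz : generic D z.
  by apply/allP => d' /zx; apply: contraTneq => ->; rewrite mul0r ltxx.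
exists z; split => //; last by rewrite dot_z mulrC subrr.
exact/(same_sign_patternP gz gx).
Qed.

Lemma perp_dot_neq0 D d z : D != [::] -> 0 < dot d d ->
  generic D z -> dot z d = 0 -> dot z (perp d) != 0.
Proof.
case: D => // d0 D _ dd /andP [zd0 _] zd; apply: contraNneq zd0 => zpd.
have := dot_perp_decomposition z d d0; rewrite zpd zd !mul0r addr0.
by move/eqP; rewrite mulf_eq0 (gt_eqF dd).
Qed.

Lemma sign_pattern_on_line D d z1 z2 : 0 < dot d d ->
  generic D z1 -> generic D z2 -> dot z1 d = 0 -> dot z2 d = 0 ->
  0 < dot z1 (perp d) * dot z2 (perp d) -> sign_pattern D z1 = sign_pattern D z2.
Proof.
move=> dd g1 g2 z1d z2d same_side; apply/(same_sign_patternP g1 g2) => d' d'D.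
have dec1 := dot_perp_decomposition z1 d d'.
have dec2 := dot_perp_decomposition z2 d d'.
rewrite z1d !mul0r addr0 in dec1; rewrite z2d !mul0r addr0 in dec2.
have z1d' : dot z1 d' != 0 by move/allP: g1 => /(_ d' d'D).
have pd' : dot (perp d) d' != 0.
  apply: contraNneq z1d' => pd0; move/eqP: dec1.
  by rewrite pd0 mulr0 mulf_eq0 (gt_eqF dd).
have : 0 < (dot d d * dot d d) * (dot z1 d' * dot z2 d').
  have -> : dot d d * dot d d * (dot z1 d' * dot z2 d') =
      dot z1 (perp d) * dot z2 (perp d) * dot (perp d) d' ^+ 2.
    by rewrite mulrACA dec1 dec2; ring.
  by rewrite mulr_gt0 // exprn_even_gt0.
by rewrite pmulr_rgt0 // mulr_gt0.
Qed.

Lemma two_of_three_same_sign (a b c : R) : a != 0 -> b != 0 -> c != 0 ->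
  [|| 0 < a * b, 0 < a * c | 0 < b * c].
Proof.
rewrite !neq_lt => /orP [] ha /orP [] hb /orP [] hc; apply/or3P;
  by first [apply: Or31; nra | apply: Or32; nra | apply: Or33; nra].
Qed.

(* A cell met on both sides of the line [dot _ d = 0] meets the line itself, on
   one of its two open rays, and each ray lies in a single cell. *)
Lemma size_crossed_patterns d D Q : D != [::] -> uniq Q ->
  (forall q, q \in Q -> realized (d :: D) (true :: q) /\ realized (d :: D) (false :: q)) ->
  (size Q <= 2)%N.
Proof.
move=> D_nz uQ crossed.
have on_line q : q \in Q -> exists z,
    [/\ generic D z, sign_pattern D z = q, dot z d = 0 & 0 < dot d d].
  case/crossed => [[x /andP [xd gx] [xpos xq]] [y /andP [yd gy] [yneg yq]]].
  have yneg' : dot y d < 0 by move: yd; rewrite neq_lt yneg orbF.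
  have [z [gz zx zd]] := sign_pattern_crossing gx gy (etrans xq (esym yq)) xpos yneg'.
  by exists z; split => //; [rewrite zx | exact: dot_self_gt0 xd].
case: Q uQ crossed on_line => [|q0 [|q1 [|q2 Q]]] // uQ _ on_line.
have [q0Q q1Q q2Q] : [/\ q0 \in [:: q0, q1, q2 & Q], q1 \in [:: q0, q1, q2 & Q]
    & q2 \in [:: q0, q1, q2 & Q]] by rewrite !inE !eqxx !orbT.
have [z0 [g0 p0 zd0 dd]] := on_line q0 q0Q.
have [z1 [g1 p1 zd1 _]] := on_line q1 q1Q.
have [z2 [g2 p2 zd2 _]] := on_line q2 q2Q.
have opposite_sides z z' : generic D z -> generic D z' -> dot z d = 0 -> dot z' d = 0 ->
    sign_pattern D z != sign_pattern D z' -> dot z (perp d) * dot z' (perp d) <= 0.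
  move=> gz gz' zd z'd; apply: contraNle => same_side.
  by rewrite (sign_pattern_on_line dd gz gz' zd z'd same_side).
move: uQ; rewrite /= !inE !negb_or -p0 -p1 -p2.
case/and4P => /and3P [n01 n02 _] /andP [n12 _] _ _.
have c0 := perp_dot_neq0 D_nz dd g0 zd0; have c1 := perp_dot_neq0 D_nz dd g1 zd1.
have c2 := perp_dot_neq0 D_nz dd g2 zd2.
case/or3P: (two_of_three_same_sign c0 c1 c2); rewrite ltNge.
- by rewrite (opposite_sides _ _ g0 g1 zd0 zd1 n01).
- by rewrite (opposite_sides _ _ g0 g2 zd0 zd2 n02).
- by rewrite (opposite_sides _ _ g1 g2 zd1 zd2 n12).
Qed.

Lemma size_sign_patterns d D P : uniq P ->
  (forall p, p \in P -> realized (d :: D) p) -> (size P <= 2 * size (d :: D))%N.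
Proof.
elim: D d P => [|d' D IH] d P uP realP.
  apply: (@uniq_leq_size _ P [:: [:: true]; [:: false]]) => // p /realP [x _ <-].
  by rewrite /sign_pattern /= !inE; case: (0 < dot x d).
have nilP : [::] \notin P.
  by apply/negP => /realP [x _ /(congr1 size)]; rewrite size_sign_pattern.
have real_at b q : q \in tails_at b P -> realized (d :: d' :: D) (b :: q).
  by rewrite mem_tails_at => /realP.
have uPt := tails_at_uniq true uP; have uPf := tails_at_uniq false uP.
rewrite (size_tails_at nilP) size_union_inter [size _]/= mulnS [(2 + _)%N]addnC.
apply: leq_add.
- apply: (IH d') => [|q].
    rewrite cat_uniq uPt filter_uniq // andbT.
    by apply/hasPn => q; rewrite mem_filter => /andP [].
  by rewrite mem_cat mem_filter => /orP [|/andP [_]] /real_at /realized_behead.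
- apply: (@size_crossed_patterns d (d' :: D)) => [//||q]; first exact: filter_uniq.
  by rewrite mem_filter => /andP [/real_at ? /real_at ?].
Qed.

End SignPatterns.

Lemma sorted_ends (T : Type) (r : rel T) (x y : T) (s : seq T) :
  sorted r (x :: rcons s y) -> r x (head y s) /\ r (last x s) y.
Proof.
rewrite /= rcons_path => /andP [xs sy]; split => //.
by case: s xs sy => [|z s] /= => [_ //|/andP []].
Qed.

Section Leaves.

Variables (V : finType) (e : rel V).
Hypothesis e_sym : symmetric e.

Definition leaf_nbr (v : V) : V := odflt v [pick w | e v w].

Lemma leaf_nbrP v w : v \in leaves e -> e v w = (w == leaf_nbr v).
Proof.
rewrite inE => /cards1P [a Ea]; have nbr_a w' : e v w' = (w' == a).
  by rewrite -in_set1 -Ea inE.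
rewrite /leaf_nbr nbr_a; case: pickP => [b /=|/(_ a)]; first by rewrite nbr_a => /eqP ->.
by rewrite nbr_a eqxx.
Qed.

Lemma simple_path_ends u v p : u != v -> simple_path e u v p ->
  exists s, [/\ p = rcons s v, e u (head v s) & e (last u s) v].
Proof.
move=> uv [+ _]; case/lastP: p => [_ /= uv_eq|s w]; first by rewrite uv_eq eqxx in uv.
rewrite last_rcons => pth <-; have [] := sorted_ends pth.
by exists s.
Qed.

Lemma connect_simple_path u v : connect e u v -> exists p, simple_path e u v p.
Proof.
case/connectP => p pth ->; case/shortenP: pth => p' pth' uq _.
by exists p'; split.
Qed.

Variables (R : realFieldType) (pos : V -> R * R).

Definition leaf_vec (v : V) : R * R :=
  ((pos (leaf_nbr v)).1 - (pos v).1, (pos (leaf_nbr v)).2 - (pos v).2).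

Lemma dot_leaf_vec v d : dot (leaf_vec v) d = dot (pos (leaf_nbr v)) d - dot (pos v) d.
Proof. by rewrite /dot /=; ring. Qed.

Lemma monotone_path_leaf_signs u v p d :
  u \in leaves e -> v \in leaves e -> u != v -> simple_path e u v p ->
  dmonotone d [seq pos x | x <- u :: p] ->
  (0 < dot (leaf_vec u) d) != (0 < dot (leaf_vec v) d).
Proof.
move=> uL vL uv sp [_]; have [s [-> eus esv]] := simple_path_ends uv sp.
rewrite !dot_leaf_vec !subr_gt0.
have -> : leaf_nbr u = head v s by apply/esym/eqP; rewrite -leaf_nbrP.
have -> : leaf_nbr v = last u s by apply/esym/eqP; rewrite -leaf_nbrP // e_sym.
rewrite -map_comp !sorted_map.
by case=> /(@sorted_ends V) [/= h1 h2]; rewrite ?h1 ?(lt_gtF h2) ?h2 ?(lt_gtF h1).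
Qed.

End Leaves.

Theorem lemma7 (R : realFieldType) (V : finType) (pos : V -> R * R)
  (e : rel V) (D : seq (R * R)) :
  injective pos ->
  uniq D ->
  (forall d, d \in D -> is_direction d) ->
  (forall d d', d \in D -> d' \in D -> ~~ opposite d d') ->
  (forall d, d \in D -> dgen_pos d [seq pos x | x <- enum V]) ->
  is_tree e ->
  D_monotone_tree pos e D ->
  (#|leaves e| <= 2 * size D)%N.
Proof.
move=> pos_inj _ _ _ gen [[e_sym e_irr] e_conn _] mono.
case: D gen mono => [|d D] gen mono.
  rewrite leqn0 cards_eq0; apply/eqP/setP => v.
  by case: (mono v v) => d'; rewrite in_nil.
have leaf_generic v : v \in leaves e -> generic (d :: D) (leaf_vec e pos v).
  move=> vL; apply/allP => d' d'D; rewrite dot_leaf_vec subr_eq0.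
  apply: (gen d' d'D); rewrite ?map_f ?mem_enum //.
  have evn : e v (leaf_nbr e v) by rewrite leaf_nbrP.
  by apply/eqP => /pos_inj nv; rewrite nv e_irr in evn.
have pattern_inj :
    {in leaves e &, injective (fun v => sign_pattern (d :: D) (leaf_vec e pos v))}.
  move=> u v uL vL same; apply/eqP/negPn/negP => uv.
  have [p sp] := connect_simple_path (e_conn u v).
  have [d' d'D /(_ p sp) mon] := mono u v.
  have := monotone_path_leaf_signs e_sym uL vL uv sp mon.
  by move/eq_in_map: same => /(_ d' d'D) ->; rewrite eqxx.
rewrite cardE -(size_map (fun v => sign_pattern (d :: D) (leaf_vec e pos v))).
apply: size_sign_patterns.
  by rewrite map_inj_in_uniq ?enum_uniq // => u v; rewrite !mem_enum; apply: pattern_inj.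
move=> q /mapP [v]; rewrite mem_enum => vL ->.
by exists (leaf_vec e pos v); rewrite ?leaf_generic.
Qed.
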